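(* Let $P$ be any poset on $\{1,2,\ldots,n\}$ and $k$ any field. Let $S=k[U_J]_{J\in\mathcal{J}_{\mathrm{conn}}(P)}$ be the polynomial ring with one variable for each nonempty connected order ideal of $P$, and let $\varphi:S\to R_P$ be the $k$-algebra map $U_J\mapsto \mathbf{x}^J:=\prod_{j\in J}x_j$. Then $\varphi$ is surjective, so $0\to I_P\to S\xrightarrow{\varphi} R_P\to 0$ is a presentation of $R_P$ with $I_P=\ker\varphi$, and this presentation is minimal; moreover $I_P$ has a minimal generating set indexed by $\Pi(P)$, consisting of the binomials $$\mathrm{syz}_{J_1,J_2}:=U_{J_1}U_{J_2}-U_{J_1\cup J_2}\cdot U_{J^{(1)}}U_{J^{(2)}}\cdots U_{J^{(t)}},\qquad \{J_1,J_2\}\in\Pi(P),$$ where $J^{(1)},\ldots,J^{(t)}$ are the connected components (i.e. the vertex sets of the connected components of the restricted Hasse diagram) of $J_1\cap J_2$.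
   Context: All posets are finite. A weak $P$-partition of a poset $P$ on $\{1,\ldots,n\}$ is a map $f:\{1,\ldots,n\}\to\mathbb{N}=\{0,1,2,\ldots\}$ with $f(i)\ge f(j)$ whenever $i<_P j$. $R_P$ is the subalgebra of $k[x_1,\ldots,x_n]$ spanned $k$-linearly by the monomials $\mathbf{x}^f=x_1^{f(1)}\cdots x_n^{f(n)}$ for $f$ a weak $P$-partition. An order ideal of $P$ is a subset $I$ with $p\le_P i\in I\Rightarrow p\in I$. A connected order ideal is a nonempty order ideal $J$ whose induced Hasse diagram (the Hasse diagram of $P$ restricted to $J$) is connected; $\mathcal{J}_{\mathrm{conn}}(P)$ is the set of these. Two connected order ideals intersect trivially if they are disjoint or nested (one contains the other), and nontrivially otherwise. $\Pi(P)$ is the set of unordered pairs $\{J_1,J_2\}$ of connected order ideals intersecting nontrivially. *)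

From HB Require Import structures.
From mathcomp Require Import all_boot all_order all_algebra.
From mathcomp Require Export mpoly.
Set Implicit Arguments. Unset Strict Implicit. Unset Printing Implicit Defensive.
Import GRing.Theory.
Local Open Scope ring_scope.

(* A poset P on {1,...,n} is represented by its order relation [le] on 'I_n
   (the hypotheses that [le] is a partial order are stated in the theorem). *)
Section Poset.
Variables (n : nat) (le : rel 'I_n).

Definition plt (i j : 'I_n) : bool := (i != j) && le i j.

Definition covers (i j : 'I_n) : bool :=
  plt i j && [forall k, ~~ (plt i k && plt k j)].

Definition order_ideal (I : {set 'I_n}) : bool :=
  [forall i, forall p, (le p i && (i \in I)) ==> (p \in I)].

Definition hasse_in (A : {set 'I_n}) : rel 'I_n :=
  fun x y => [&& x \in A, y \in A & covers x y || covers y x].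

Definition components (A : {set 'I_n}) : {set {set 'I_n}} :=
  [set [set y in A | connect (hasse_in A) x y] | x in A].

Definition conn_ideal (J : {set 'I_n}) : bool :=
  [&& order_ideal J, J != set0 &
      [forall x in J, forall y in J, connect (hasse_in J) x y]].

Definition cideal : Type := {J : {set 'I_n} | conn_ideal J}.

Definition nontriv (J1 J2 : {set 'I_n}) : bool :=
  [&& ~~ [disjoint J1 & J2], ~~ (J1 \subset J2) & ~~ (J2 \subset J1)].

Definition weak_Ppart (m : 'X_{1..n}) : bool :=
  [forall i, forall j, plt i j ==> (m j <= m i)%N].

Variable k : fieldType.

(* R_P: the k-span of the monomials x^f, f a weak P-partition, i.e. the
   polynomials all of whose monomials are such x^f *)
Definition in_RP (q : {mpoly k[n]}) : Prop :=
  forall m, m \in msupp q -> weak_Ppart m.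

Definition xJ (J : {set 'I_n}) : {mpoly k[n]} := \prod_(j in J) 'X_j.

End Poset.

Definition cideal_fin n (le : rel 'I_n) : finType := cideal le.

(* S = k[U_J]_{J in J_conn(P)}: variables indexed by 'I_#|J_conn(P)| via
   the enumeration of the finite type J_conn(P). *)
Definition nvars n (le : rel 'I_n) : nat := #|cideal_fin le|.

Definition Sring (k : fieldType) n (le : rel 'I_n) := {mpoly k[nvars le]}.

Definition UJ (k : fieldType) n (le : rel 'I_n) (J : cideal_fin le)
  : {mpoly k[nvars le]} := 'X_(enum_rank J).

(* U_A for a set A; A is always a connected order ideal where this is used
   (union of two nontrivially-intersecting connected ideals, connected
   components of their intersection); the default value 0 is never hit. *)
Definition Uset (k : fieldType) n (le : rel 'I_n) (A : {set 'I_n})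
  : {mpoly k[nvars le]} :=
  match @insub _ (conn_ideal le) (cideal le) A with
  | Some J => UJ k J
  | None => 0
  end.

Definition phi (k : fieldType) n (le : rel 'I_n) (p : {mpoly k[nvars le]})
  : {mpoly k[n]} :=
  mmap (@mpolyC n k) (fun i => xJ k (val (enum_val i : cideal_fin le))) p.

Definition syz (k : fieldType) n (le : rel 'I_n) (J1 J2 : cideal_fin le)
  : {mpoly k[nvars le]} :=
  UJ k J1 * UJ k J2
  - Uset k le (val J1 :|: val J2)
    * \prod_(K in components le (val J1 :&: val J2)) Uset k le K.

Definition in_ideal (k : fieldType) (m : nat) (I : finType)
  (g : I -> {mpoly k[m]}) (Q : pred I) (p : {mpoly k[m]}) : Prop :=
  exists c : I -> {mpoly k[m]}, p = \sum_(i | Q i) c i * g i.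

Arguments in_RP {n} le {k} q.
Arguments phi k {n le} p.
Arguments syz k {n le} J1 J2.
Arguments UJ k {n le} J.
Arguments Uset k {n} le A.
Arguments in_ideal {k m I} g Q p.

From Pilot Require Import Defs.
From HB Require Import structures.
From mathcomp Require Import all_boot all_order all_algebra.
From mathcomp Require Import mpoly zify.
Set Implicit Arguments. Unset Strict Implicit. Unset Printing Implicit Defensive.
Import GRing.Theory.

(* The monomial U^m is sent to x^f with f x = the number of variables of U^m
   (with multiplicity) whose ideal contains x; such f are weak P-partitions,
   and every weak P-partition arises, since a nonzero one is the indicator of
   its support (an order ideal, the disjoint union of its connected components)
   plus a smaller one.  Call U^m laminar when its ideals pairwise intersect
   trivially: a laminar monomial is determined by its image, because its
   maximal ideals are the connected pieces of the support it covers.  A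
   syzygy rewrites U_J1 U_J2 into a monomial with the same image and larger
   weight sum_J 3^|J|, which is bounded on each fibre; hence modulo the
   syzygies every polynomial is congruent to a combination of laminar
   monomials, which lies in the kernel only if it is zero.  Monomials of
   degree at most one are laminar, so the kernel lies in (U_J)^2, and
   evaluating at U_J1 = U_J2 = 1, all other U_J = 0, kills every syzygy but
   syz_J1,J2. *)

Section IdealMembership.
Variables (k : fieldType) (m : nat) (I : finType).
Variables (g : I -> {mpoly k[m]}) (Q : pred I).
Local Open Scope ring_scope.

Lemma in_ideal0 : in_ideal g Q 0.
Proof. by exists (fun _ => 0); rewrite big1 // => i _; rewrite mul0r. Qed.

Lemma in_idealD p q : in_ideal g Q p -> in_ideal g Q q -> in_ideal g Q (p + q).
Proof.
case=> c1 -> [c2 ->]; exists (fun i => c1 i + c2 i).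
by rewrite -big_split; apply: eq_bigr => i _; rewrite mulrDl.
Qed.

Lemma in_idealMl r p : in_ideal g Q p -> in_ideal g Q (r * p).
Proof.
case=> c ->; exists (fun i => r * c i).
by rewrite mulr_sumr; apply: eq_bigr => i _; rewrite mulrA.
Qed.

Lemma in_idealZ c p : in_ideal g Q p -> in_ideal g Q (c *: p).
Proof. by rewrite -mul_mpolyC; apply: in_idealMl. Qed.

Lemma in_ideal_gen i : Q i -> in_ideal g Q (g i).
Proof.
move=> Qi; exists (fun j => (j == i)%:R).
rewrite (bigD1 i) //= eqxx mul1r big1 ?addr0 // => j /andP[_ /negbTE ->].
by rewrite mul0r.
Qed.

Lemma in_ideal_rmorph_eq0 (R : nzRingType) (f : {rmorphism {mpoly k[m]} -> R}) p :
  (forall i, Q i -> f (g i) = 0) -> in_ideal g Q p -> f p = 0.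
Proof.
move=> fg0 [c ->]; rewrite rmorph_sum big1 // => i Qi.
by rewrite rmorphM fg0 // mulr0.
Qed.

End IdealMembership.

Lemma sum_eq_mem (T : finType) (K : {set T}) x :
  (\sum_(y in K) (y == x))%N = (x \in K).
Proof.
case: (boolP (x \in K)) => xK.
  by rewrite (bigD1 x) //= eqxx big1 // => y /andP[_ /negbTE ->].
by rewrite big1 // => y yK; apply/eqP; rewrite eqb0; apply: contraNneq xK => <-.
Qed.

Lemma partition_sum_mem (T : finType) (P : {set {set T}}) D x : partition P D ->
  (\sum_(K in P) (x \in K))%N = (x \in D).
Proof.
move=> pP; rewrite -sum_eq_mem (set_partition_big _ pP) /=.
by apply: eq_bigr => K _; rewrite sum_eq_mem.
Qed.

Lemma sum_mem_card (T : finType) (J : {set T}) : (\sum_x (x \in J))%N = #|J|.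
Proof.
by rewrite -sum1_card [RHS]big_mkcond /=; apply: eq_bigr => x _; case: (x \in J).
Qed.

Lemma mnm_neq0_gt0 (d : nat) (m : 'X_{1..d}) : m != 0%MM -> exists i, (0 < m i)%N.
Proof.
move=> nm; apply/existsP; apply: contraR nm; rewrite negb_exists => /forallP H.
by apply/eqP/mnmP=> i; rewrite mnm0E; move: (H i); rewrite lt0n negbK => /eqP.
Qed.

Section HasseDiagram.
Variables (n : nat) (le : rel 'I_n).
Hypotheses (le_anti : antisymmetric le) (le_trans : transitive le).
Implicit Types (A B J K : {set 'I_n}).
Local Notation plt := (plt le).
Local Notation hasse_in := (hasse_in le).

Lemma plt_le x y : plt x y -> le x y.
Proof. by case/andP. Qed.

Lemma plt_trans x y z : plt x y -> plt y z -> plt x z.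
Proof.
move=> /andP[nxy lxy] /andP[nyz lyz]; rewrite /Defs.plt (le_trans lxy lyz) andbT.
apply: contra nxy => /eqP exz; subst z; apply/eqP/le_anti.
by rewrite lxy lyz.
Qed.

Lemma hasse_in_sym A : ssrbool.symmetric (hasse_in A).
Proof. by move=> x y; rewrite /Defs.hasse_in andbCA orbC. Qed.

Lemma connect_hasse_in_sym A : connect_sym (hasse_in A).
Proof. exact/sym_connect_sym/hasse_in_sym. Qed.

Lemma connect_hasse_in_sub A B x y : A \subset B ->
  connect (hasse_in A) x y -> connect (hasse_in B) x y.
Proof.
move=> sAB; apply: connect_sub => u v /and3P[uA vA c]; apply: connect1.
by rewrite /Defs.hasse_in (subsetP sAB _ uA) (subsetP sAB _ vA).
Qed.

Lemma order_idealP A :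
  reflect (forall i p, le p i -> i \in A -> p \in A) (order_ideal le A).
Proof.
apply: (iffP forallP) => [H i p lpi iA|H i].
  by move: (H i) => /forallP /(_ p); rewrite lpi iA.
by apply/forallP=> p; apply/implyP=> /andP[lpi iA]; apply: H lpi iA.
Qed.

Lemma conn_idealP J : reflect [/\ order_ideal le J, J != set0 &
  forall x y, x \in J -> y \in J -> connect (hasse_in J) x y] (conn_ideal le J).
Proof.
apply: (iffP and3P) => [[i n0 /forallP H]|[i n0 H]]; split=> //.
  by move=> x y xJ yJ; move: (H x); rewrite xJ => /forallP /(_ y); rewrite yJ.
apply/forallP => x; apply/implyP=> xJ; apply/forallP=> y; apply/implyP=> yJ.
exact: H.
Qed.

Lemma conn_ideal_ideal J : conn_ideal le J -> order_ideal le J.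
Proof. by case/and3P. Qed.

Lemma conn_ideal_neq0 J : conn_ideal le J -> J != set0.
Proof. by case/and3P. Qed.

Lemma order_idealI A B : order_ideal le A -> order_ideal le B ->
  order_ideal le (A :&: B).
Proof.
move=> /order_idealP iA /order_idealP iB; apply/order_idealP=> i p lpi.
by rewrite !inE => /andP[/(iA _ _ lpi) -> /(iB _ _ lpi) ->].
Qed.

Lemma conn_idealU J1 J2 : conn_ideal le J1 -> conn_ideal le J2 ->
  ~~ [disjoint J1 & J2] -> conn_ideal le (J1 :|: J2).
Proof.
move=> /conn_idealP[i1 n1 c1] /conn_idealP[i2 n2 c2] /pred0Pn[z /andP[z1 z2]].
apply/conn_idealP; split.
- apply/order_idealP=> i p lpi; rewrite !inE => /orP[h|h].
    by move/order_idealP: i1 => /(_ i p lpi h) ->.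
  by move/order_idealP: i2 => /(_ i p lpi h) ->; rewrite orbT.
- by apply/set0Pn; exists z; apply/setUP; left.
have to_z x : x \in J1 :|: J2 -> connect (hasse_in (J1 :|: J2)) x z.
  rewrite inE => /orP[h|h].
    exact: connect_hasse_in_sub (subsetUl J1 J2) (c1 _ _ h z1).
  exact: connect_hasse_in_sub (subsetUr J1 J2) (c2 _ _ h z2).
move=> x y hx hy; apply: connect_trans (to_z x hx) _.
by rewrite connect_hasse_in_sym; apply: to_z.
Qed.

Definition open_interval (p y : 'I_n) : {set 'I_n} := [set z | plt p z && plt z y].

Lemma open_interval0_hasse_in A p y : y \in A -> p \in A -> plt p y ->
  open_interval p y = set0 -> hasse_in A p y.
Proof.
move=> yA pA lpy e0; rewrite /Defs.hasse_in yA pA /covers lpy /=.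
apply/orP; left; apply/forallP=> z; apply/negP=> hz.
have: z \in open_interval p y by rewrite inE.
by rewrite e0 inE.
Qed.

Lemma open_interval_properl p z y : plt p z -> plt z y ->
  open_interval p z \proper open_interval p y.
Proof.
move=> pz zy; apply/properP; split.
  by apply/subsetP=> w; rewrite !inE => /andP[-> wz]; rewrite (plt_trans wz zy).
by exists z; rewrite !inE ?pz // /Defs.plt eqxx andbF.
Qed.

Lemma open_interval_properr p z y : plt p z -> plt z y ->
  open_interval z y \proper open_interval p y.
Proof.
move=> pz zy; apply/properP; split.
  by apply/subsetP=> w; rewrite !inE => /andP[zw ->]; rewrite (plt_trans pz zw).
by exists z; rewrite !inE ?pz ?zy // /Defs.plt eqxx.
Qed.

(* Within an order ideal, p < y is refined into a chain of covers by splitting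
   the open interval (p, y) at any of its points. *)
Lemma order_ideal_plt_connect A p y : order_ideal le A -> y \in A -> plt p y ->
  connect (hasse_in A) p y.
Proof.
move=> /order_idealP idA.
move: {2}#|open_interval p y| (leqnn #|open_interval p y|) => c.
elim: c p y => [|c IH] p y hc yA lpy; have pA := idA _ _ (plt_le lpy) yA.
  apply/connect1/open_interval0_hasse_in => //.
  by apply/eqP; rewrite -cards_eq0 -leqn0.
have [e0|[z]] := set_0Vmem (open_interval p y).
  exact/connect1/open_interval0_hasse_in.
rewrite inE => /andP[pz zy]; have zA := idA _ _ (plt_le zy) yA.
have ltc (X : {set 'I_n}) : X \proper open_interval p y -> (#|X| <= c)%N.
  by move=> sX; rewrite -ltnS (leq_trans (proper_card sX)).
apply: (@connect_trans _ _ z).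
  exact: IH (ltc _ (open_interval_properl pz zy)) zA pz.
exact: IH (ltc _ (open_interval_properr pz zy)) yA zy.
Qed.

Lemma components_partition A : partition (components le A) A.
Proof.
apply: equivalence_partitionP => x y z _ _ _; split; first exact: connect0.
move=> cxy; apply/idP/idP => [cxz|]; last exact: connect_trans.
by apply: connect_trans cxz; rewrite connect_hasse_in_sym.
Qed.

Lemma components_sub A K : K \in components le A -> K \subset A.
Proof. exact: partitionS (components_partition A). Qed.

Lemma components_neq0 A K : K \in components le A -> K != set0.
Proof. exact: partition_neq0 (components_partition A). Qed.

Lemma component_of A x :
  x \in A -> [set y in A | connect (hasse_in A) x y] \in components le A.
Proof. exact: imset_f. Qed.

Lemma components_order_ideal A K : order_ideal le A ->
  K \in components le A -> order_ideal le K.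
Proof.
move=> idA /imsetP[x xA ->]; apply/order_idealP => i p lpi.
rewrite !inE => /andP[iA cxi]; have pA := order_idealP _ idA i p lpi iA.
rewrite pA /=; case: (eqVneq p i) => [-> //|npi].
apply: connect_trans cxi _; rewrite connect_hasse_in_sym.
by apply: order_ideal_plt_connect; rewrite // /Defs.plt npi.
Qed.

Lemma components_connected A K : K \in components le A ->
  forall y z, y \in K -> z \in K -> connect (hasse_in K) y z.
Proof.
move=> /imsetP[x xA ->] y z; rewrite !inE => /andP[yA cxy] /andP[zA cxz].
have /connectP[p pth ->] : connect (hasse_in A) y z.
  by apply: connect_trans cxz; rewrite connect_hasse_in_sym.
elim: p y {yA} cxy pth => [|w p IH] y cxy /=; first by move=> _; apply: connect0.
case/andP=> /and3P[yA wA c] pth.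
have cxw : connect (hasse_in A) x w.
  by apply: connect_trans cxy (connect1 _); rewrite /Defs.hasse_in yA wA.
apply: connect_trans (IH _ cxw pth); apply: connect1.
by rewrite /Defs.hasse_in !inE yA wA cxy cxw.
Qed.

Lemma components_conn_ideal A K : order_ideal le A ->
  K \in components le A -> conn_ideal le K.
Proof.
move=> idA KA; apply/conn_idealP; split.
- exact: components_order_ideal KA.
- exact: components_neq0 KA.
- exact: components_connected KA.
Qed.

End HasseDiagram.

Section MonomialMap.
Variables (n : nat) (le : rel 'I_n).
Hypotheses (le_anti : antisymmetric le) (le_trans : transitive le).
Local Notation N := (nvars le).
Implicit Types (A K : {set 'I_n}) (m : 'X_{1..N}).

Definition var_ideal (i : 'I_N) : {set 'I_n} := val (enum_val i : cideal_fin le).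

Definition phi_mnm m : 'X_{1..n} :=
  [multinom (\sum_(i < N) m i * (x \in var_ideal i))%N | x < n].

(* The index of the variable U_A; the default d is used only when A is not a
   connected order ideal. *)
Definition var_of (d : cideal_fin le) A : 'I_N := enum_rank (insubd d A).

Lemma var_ideal_conn i : conn_ideal le (var_ideal i).
Proof. exact: valP. Qed.

Lemma var_ideal_inj : injective var_ideal.
Proof. by move=> i j /val_inj /enum_val_inj. Qed.

Lemma var_ideal_rank (J : cideal_fin le) : var_ideal (enum_rank J) = val J.
Proof. by rewrite /var_ideal enum_rankK. Qed.

Lemma var_ofK d A : conn_ideal le A -> var_ideal (var_of d A) = A.
Proof. by move=> cA; rewrite var_ideal_rank val_insubd cA. Qed.

Lemma var_ideal_neq0 i : var_ideal i != set0.
Proof. exact: conn_ideal_neq0 (var_ideal_conn i). Qed.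

Lemma phi_mnmE m x : phi_mnm m x = (\sum_(i < N) m i * (x \in var_ideal i))%N.
Proof. exact: mnmE. Qed.

Lemma phi_mnmD m1 m2 : phi_mnm (m1 + m2) = (phi_mnm m1 + phi_mnm m2)%MM.
Proof.
apply/mnmP=> x; rewrite mnmDE !phi_mnmE -big_split /=; apply: eq_bigr=> i _.
by rewrite mnmDE mulnDl.
Qed.

Lemma phi_mnm0 : phi_mnm 0 = 0%MM.
Proof. by apply/mnmP=> x; rewrite mnm0E phi_mnmE big1 // => i _; rewrite mnm0E. Qed.

Lemma phi_mnmU i x : phi_mnm U_(i) x = (x \in var_ideal i).
Proof.
rewrite phi_mnmE (bigD1 i) //= mnm1E eqxx mul1n big1 ?addn0 // => j nji.
by rewrite mnm1E eq_sym (negbTE nji).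
Qed.

Lemma phi_mnm_sum_var_of d (C : {set {set 'I_n}}) x :
  {in C, forall K, conn_ideal le K} ->
  phi_mnm (\sum_(K in C) U_(var_of d K)) x = (\sum_(K in C) (x \in K))%N.
Proof.
move=> cC; rewrite (big_morph phi_mnm phi_mnmD phi_mnm0) mnm_sumE.
by apply: eq_bigr => K KC; rewrite phi_mnmU var_ofK // cC.
Qed.

Lemma phi_mnm_ge m i x : x \in var_ideal i -> (m i <= phi_mnm m x)%N.
Proof. by move=> xi; rewrite phi_mnmE (bigD1 i) //= xi muln1 leq_addr. Qed.

Lemma phi_mnm_ge2 m i j x : i != j -> x \in var_ideal i -> x \in var_ideal j ->
  (m i + m j <= phi_mnm m x)%N.
Proof.
move=> nij xi xj; rewrite phi_mnmE (bigD1 i) //= (bigD1 j) 1?eq_sym //= xi xj.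
by rewrite !muln1 addnA leq_addr.
Qed.

Lemma phi_mnm_gt0 m x :
  (0 < phi_mnm m x)%N -> exists2 i, (0 < m i)%N & x \in var_ideal i.
Proof.
rewrite phi_mnmE => h; apply/exists_inP; apply: contraLR h.
rewrite negb_exists_in => /forall_inP H; rewrite -leqNgt leqn0; apply/eqP/big1 => i _.
case: (boolP (x \in var_ideal i)) => xi; last by rewrite muln0.
by case: (posnP (m i)) => [->|mpos]; [rewrite mul0n | move: (H i mpos); rewrite xi].
Qed.

Lemma phi_mnm_le_mdeg m x : (phi_mnm m x <= mdeg m)%N.
Proof.
rewrite phi_mnmE mdegE; apply: leq_sum => i _.
by case: (x \in var_ideal i); rewrite ?muln1 ?muln0.
Qed.

Lemma mdeg_phi_mnm m : mdeg (phi_mnm m) = (\sum_(i < N) m i * #|var_ideal i|)%N.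
Proof.
rewrite mdegE (eq_bigr _ (fun x _ => phi_mnmE m x)) exchange_big /=.
by apply: eq_bigr => i _; rewrite -big_distrr /= sum_mem_card.
Qed.

Lemma phi_mnm_eq0 m : phi_mnm m = 0%MM -> m = 0%MM.
Proof.
move=> h; apply/mnmP=> i; rewrite mnm0E; apply/eqP; rewrite -leqn0.
have /set0Pn[x xi] := var_ideal_neq0 i.
by have := phi_mnm_ge m xi; rewrite h mnm0E.
Qed.

Lemma phi_mnm_weak m : weak_Ppart le (phi_mnm m).
Proof.
apply/forallP=> x; apply/forallP=> y; apply/implyP=> /andP[_ lxy].
rewrite !phi_mnmE; apply: leq_sum => i _.
case: (boolP (y \in var_ideal i)) => yi; last by rewrite muln0.
by move/order_idealP: (conn_ideal_ideal (var_ideal_conn i)) => /(_ y x lxy yi) ->.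
Qed.

Lemma phi_mnm_onto_weak f : weak_Ppart le f -> exists m, phi_mnm m = f.
Proof.
move: {2}(mdeg f) (leqnn (mdeg f)) => d; elim: d f => [|d IH] f.
  by rewrite leqn0 mdeg_eq0 => /eqP -> _; exists 0%MM; apply: phi_mnm0.
move=> hd wf; have [->|nf] := eqVneq f 0%MM; first by exists 0%MM; apply: phi_mnm0.
pose supp := [set x | (0 < f x)%N].
pose f' := [multinom (f x).-1 | x < n].
pose ind := [multinom ((x \in supp) : nat) | x < n].
have ef : f = (f' + ind)%MM.
  by apply/mnmP=> x; rewrite mnmDE !mnmE inE; case: (f x) => [|t]; rewrite ?addn1.
have [x fx] := mnm_neq0_gt0 nf.
have wf' : weak_Ppart le f'.
  apply/forallP=> y; apply/forallP=> z; apply/implyP=> pyz.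
  move/forallP: wf => /(_ y) /forallP /(_ z); rewrite pyz !mnmE => h.
  by rewrite -!subn1 leq_sub2r.
have [m0 em0] : exists m0, phi_mnm m0 = f'.
  apply: IH wf'; rewrite -ltnS (leq_trans _ hd) // [X in (_ < mdeg X)%N]ef mdegD.
  by rewrite -{1}[mdeg f']addn0 ltn_add2l mdegE (bigD1 x) //= mnmE inE fx.
have idS : order_ideal le supp.
  apply/order_idealP => i p lpi; rewrite !inE => fi.
  have [-> //|npi] := eqVneq p i.
  move/forallP: wf => /(_ p) /forallP /(_ i); rewrite /Defs.plt npi lpi.
  exact: leq_trans.
have xS : x \in supp by rewrite inE.
pose d0 : cideal_fin le := Sub _ (components_conn_ideal le_anti le_trans idS (component_of le xS)).
exists (m0 + \sum_(K in components le supp) U_(var_of d0 K))%MM.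
apply/mnmP=> y; rewrite phi_mnmD mnmDE em0 phi_mnm_sum_var_of; last first.
  by move=> K; apply: components_conn_ideal.
by rewrite (partition_sum_mem _ (components_partition le supp)) [in RHS]ef mnmDE !mnmE.
Qed.

End MonomialMap.

Section Laminar.
Variables (n : nat) (le : rel 'I_n).
Local Notation N := (nvars le).
Local Notation var_ideal := (@var_ideal n le).
Local Notation phi_mnm := (@phi_mnm n le).
Implicit Types (m : 'X_{1..N}).

Definition laminar m : bool := [forall i, forall j,
  (0 < m i)%N ==> (0 < m j)%N ==> ~~ nontriv (var_ideal i) (var_ideal j)].

Definition maximal_vars m : {set 'I_N} := [set i | (0 < m i)%N &&
  [forall j, (0 < m j)%N ==> ~~ (var_ideal i \proper var_ideal j)]].

Lemma laminarP m : reflect (forall i j, (0 < m i)%N -> (0 < m j)%N ->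
  ~~ nontriv (var_ideal i) (var_ideal j)) (laminar m).
Proof.
apply: (iffP forallP) => [H i j mi mj|H i].
  by move: (H i) => /forallP /(_ j); rewrite mi mj.
by apply/forallP=> j; apply/implyP=> mi; apply/implyP=> mj; apply: H.
Qed.

Lemma maximal_varsP m i : reflect ((0 < m i)%N /\
  forall j, (0 < m j)%N -> ~~ (var_ideal i \proper var_ideal j)) (i \in maximal_vars m).
Proof.
rewrite inE; apply: (iffP andP) => [[mi /forallP H]|[mi H]]; split=> //.
  by move=> j mj; move: (H j); rewrite mj.
by apply/forallP=> j; apply/implyP; apply: H.
Qed.

Lemma maximal_var_above m i : (0 < m i)%N ->
  exists2 j, j \in maximal_vars m & var_ideal i \subset var_ideal j.
Proof.
move=> mi; pose P j := (0 < m j)%N && (var_ideal i \subset var_ideal j).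
have Pi : P i by rewrite /P mi subxx.
have [j /andP[mj sij] jmax] := @arg_maxnP _ i P (fun j => #|var_ideal j|) Pi.
exists j => //; apply/maximal_varsP; split=> // j' mj'; apply/negP=> prj.
have := jmax j'; rewrite /P mj' (subset_trans sij (proper_sub prj)) => /(_ isT) /=.
by rewrite leqNgt (proper_card prj).
Qed.

Lemma maximal_vars_disjoint m i j : laminar m ->
  i \in maximal_vars m -> j \in maximal_vars m -> i != j ->
  [disjoint var_ideal i & var_ideal j].
Proof.
move=> /laminarP L /maximal_varsP[mi Hi] /maximal_varsP[mj Hj] nij.
have neq : var_ideal i != var_ideal j by apply: contra nij => /eqP/var_ideal_inj ->.
move: (L i j mi mj); rewrite /nontriv !negb_and !negbK => /or3P[//|sij|sji].
  by move: (Hi j mj); rewrite properEneq neq sij.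
by move: (Hj i mi); rewrite properEneq eq_sym neq sji.
Qed.

Lemma phi_mnm_gt0_maximal m y : (0 < phi_mnm m y)%N ->
  exists2 j, j \in maximal_vars m & y \in var_ideal j.
Proof.
case/phi_mnm_gt0 => j mj yj; have [j' j'm sjj'] := maximal_var_above mj.
by exists j' => //; apply: (subsetP sjj').
Qed.

(* The maximal ideals of a laminar monomial are disjoint order ideals, so no
   edge of the Hasse diagram leaves one of them inside the support. *)
Lemma maximal_var_covers m J x i : laminar m -> conn_ideal le J ->
  (forall y, y \in J -> (0 < phi_mnm m y)%N) -> x \in J ->
  i \in maximal_vars m -> x \in var_ideal i -> J \subset var_ideal i.
Proof.
move=> L /conn_idealP[_ _ cJ] supp xJ im xi; apply/subsetP => y yJ.
have cl : closed (hasse_in le J) (var_ideal i).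
  apply: intro_closed; first exact: connect_hasse_in_sym.
  move=> u v /and3P[uJ vJ cov] ui.
  have [j jm vj] := phi_mnm_gt0_maximal (supp v vJ).
  have [<- //|nji] := eqVneq j i.
  have dij := maximal_vars_disjoint L jm im nji.
  have /order_idealP idj := conn_ideal_ideal (var_ideal_conn j).
  have /order_idealP idi := conn_ideal_ideal (var_ideal_conn i).
  case/orP: cov => /andP[/andP[_ luv] _]; last exact: idi luv ui.
  by have := idj v u luv vj; rewrite (disjointFl dij).
by rewrite -(closed_connect cl (cJ x y xJ yJ)).
Qed.

Lemma maximal_vars_sub m m' : laminar m -> laminar m' ->
  phi_mnm m = phi_mnm m' -> maximal_vars m \subset maximal_vars m'.
Proof.
move=> L L' e; apply/subsetP => i im; have /maximal_varsP[mi _] := im.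
have /set0Pn[x xi] := var_ideal_neq0 i.
have s1 y : y \in var_ideal i -> (0 < phi_mnm m' y)%N.
  by move=> yi; rewrite -e (leq_trans mi (phi_mnm_ge _ yi)).
have [i' i'm xi'] := phi_mnm_gt0_maximal (s1 x xi).
have /maximal_varsP[mi' _] := i'm.
have s2 y : y \in var_ideal i' -> (0 < phi_mnm m y)%N.
  by move=> yi; rewrite e (leq_trans mi' (phi_mnm_ge _ yi)).
have H1 := maximal_var_covers L' (var_ideal_conn i) s1 xi i'm xi'.
have H2 := maximal_var_covers L (var_ideal_conn i') s2 xi' im xi.
suff -> : i = i' by [].
by apply: var_ideal_inj; apply/eqP; rewrite eqEsubset H1 H2.
Qed.

Definition maximal_part m : 'X_{1..N} := [multinom ((i \in maximal_vars m) : nat) | i < N].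
Definition lower_part m : 'X_{1..N} := [multinom (m i - (i \in maximal_vars m))%N | i < N].

Lemma lower_maximal_part m : m = (lower_part m + maximal_part m)%MM.
Proof.
apply/mnmP => i; rewrite mnmDE !mnmE subnK //.
by case: (boolP (i \in maximal_vars m)) => // /maximal_varsP[].
Qed.

Lemma laminar_lower_part m : laminar m -> laminar (lower_part m).
Proof.
move/laminarP => L; apply/laminarP => i j; rewrite !mnmE => hi hj.
by apply: L; [apply: leq_trans hi _ | apply: leq_trans hj _]; apply: leq_subr.
Qed.

Lemma mdeg_lower_part m : m != 0%MM -> (mdeg (lower_part m) < mdeg m)%N.
Proof.
move=> nm; rewrite [X in (_ < mdeg X)%N]lower_maximal_part mdegD.
rewrite -{1}[mdeg (lower_part m)]addn0 ltn_add2l.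
have [i mi] := mnm_neq0_gt0 nm; have [j jm _] := maximal_var_above mi.
by rewrite mdegE (bigD1 j) //= mnmE jm.
Qed.

Lemma laminar_phi_mnm_inj m m' : laminar m -> laminar m' ->
  phi_mnm m = phi_mnm m' -> m = m'.
Proof.
move: {2}(mdeg m) (leqnn (mdeg m)) => d; elim: d m m' => [|d IH] m m' hd L L' e.
  move: hd; rewrite leqn0 mdeg_eq0 => /eqP m0; subst m.
  by apply/esym/phi_mnm_eq0; rewrite -e phi_mnm0.
have [m0|nm] := eqVneq m 0%MM.
  by subst m; apply/esym/phi_mnm_eq0; rewrite -e phi_mnm0.
have em : maximal_vars m = maximal_vars m'.
  by apply/eqP; rewrite eqEsubset !maximal_vars_sub.
have eM : maximal_part m = maximal_part m' by apply/mnmP=> i; rewrite !mnmE em.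
rewrite (lower_maximal_part m) (lower_maximal_part m') eM; congr (_ + _)%MM.
apply: IH; rewrite ?laminar_lower_part //.
  by rewrite -ltnS (leq_trans (mdeg_lower_part nm)).
apply: (@addIm _ (phi_mnm (maximal_part m))).
by rewrite -!phi_mnmD -lower_maximal_part eM -lower_maximal_part.
Qed.

Lemma laminar_phi_mnm_le1 m : (forall x, phi_mnm m x <= 1)%N -> laminar m.
Proof.
move=> H; apply/laminarP => i j mi mj.
have [<-|nij] := eqVneq i j; first by rewrite /nontriv subxx !andbF.
rewrite /nontriv; case: (boolP [disjoint _ & _]) => //= /pred0Pn[x /andP[xi xj]].
by have := phi_mnm_ge2 m nij xi xj; have := H x; lia.
Qed.

End Laminar.

Section SyzygyMonomials.
Variables (n : nat) (le : rel 'I_n).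
Hypotheses (le_anti : antisymmetric le) (le_trans : transitive le).
Local Notation N := (nvars le).
Local Notation var_ideal := (@var_ideal n le).
Local Notation phi_mnm := (@phi_mnm n le).
Local Notation var_of := (@var_of n le).
Implicit Types (m : 'X_{1..N}).

(* Base 3 because 3 ^ a + 3 ^ b < 3 ^ c whenever a, b < c. *)
Definition weight m : nat := \sum_(i < N) m i * 3 ^ #|var_ideal i|.

Lemma weightD m1 m2 : weight (m1 + m2) = (weight m1 + weight m2)%N.
Proof. by rewrite /weight -big_split; apply: eq_bigr => i _; rewrite mnmDE mulnDl. Qed.

Lemma weightU i : weight U_(i) = 3 ^ #|var_ideal i|.
Proof.
rewrite /weight (bigD1 i) //= mnm1E eqxx mul1n big1 ?addn0 // => j nji.
by rewrite mnm1E eq_sym (negbTE nji).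
Qed.

Lemma weight_le m : (weight m <= 3 ^ n * mdeg (phi_mnm m))%N.
Proof.
rewrite mdeg_phi_mnm /weight big_distrr /=; apply: leq_sum => i _.
rewrite mulnCA leq_mul2l; apply/orP; right.
have c1 : (0 < #|var_ideal i|)%N by rewrite card_gt0 var_ideal_neq0.
have c2 : (#|var_ideal i| <= n)%N by rewrite -[X in (_ <= X)%N]card_ord max_card.
by rewrite (leq_trans (leq_pexp2l (isT : (0 < 3)%N) c2)) // leq_pmulr.
Qed.

Definition syz_mnm (i j : 'I_N) : 'X_{1..N} :=
  (U_(var_of (enum_val i) (var_ideal i :|: var_ideal j)) +
   \sum_(K in components le (var_ideal i :&: var_ideal j))
     U_(var_of (enum_val i) K))%MM.

Lemma conn_idealU_var i j : nontriv (var_ideal i) (var_ideal j) ->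
  conn_ideal le (var_ideal i :|: var_ideal j).
Proof. by case/and3P=> nd _ _; apply: conn_idealU; rewrite ?var_ideal_conn. Qed.

Lemma components_var_conn_ideal i j :
  {in components le (var_ideal i :&: var_ideal j), forall K, conn_ideal le K}.
Proof.
move=> K; apply: components_conn_ideal => //.
by apply: order_idealI; apply/conn_ideal_ideal/var_ideal_conn.
Qed.

Lemma phi_syz_mnm i j : nontriv (var_ideal i) (var_ideal j) ->
  phi_mnm (U_(i) + U_(j)) = phi_mnm (syz_mnm i j).
Proof.
move=> nt; apply/mnmP=> x; rewrite /syz_mnm !phi_mnmD !mnmDE !phi_mnmU.
rewrite phi_mnm_sum_var_of; last exact: components_var_conn_ideal.
rewrite var_ofK ?conn_idealU_var //.
rewrite (partition_sum_mem _ (components_partition le _)) !inE.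
by case: (x \in var_ideal i); case: (x \in var_ideal j).
Qed.

Lemma weight_syz_mnm i j : nontriv (var_ideal i) (var_ideal j) ->
  (weight (U_(i) + U_(j)) < weight (syz_mnm i j))%N.
Proof.
move=> nt; have /and3P[_ nsij nsji] := nt.
rewrite /syz_mnm !weightD !weightU var_ofK ?conn_idealU_var //.
have h1 := proper_card (properUl nsji); have h2 := proper_card (properUr nsij).
move: h1 h2; set u := #|_ :|: _|; case: u => [//|u]; rewrite !ltnS => h1 h2.
have e1 := leq_pexp2l (isT : (0 < 3)%N) h1.
have e2 := leq_pexp2l (isT : (0 < 3)%N) h2.
have : (0 < 3 ^ u)%N by rewrite expn_gt0.
by rewrite expnS; lia.
Qed.

End SyzygyMonomials.

HB.instance Definition _ (k : fieldType) (n : nat) (le : rel 'I_n) :=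
  GRing.RMorphism.copy (@phi k n le)
    (mmap (@mpolyC n k) (fun i => xJ k (val (enum_val i : cideal_fin le)))).

Section Presentation.
Variables (k : fieldType) (n : nat) (le : rel 'I_n).
Hypotheses (le_anti : antisymmetric le) (le_trans : transitive le).
Local Notation N := (nvars le).
Local Notation phi := (@phi k n le).
Local Notation var_ideal := (@var_ideal n le).
Local Notation phi_mnm := (@phi_mnm n le).
Local Notation laminar := (@laminar n le).
Local Notation syz_ideal := (in_ideal
  (fun JJ : cideal_fin le * cideal_fin le => syz k JJ.1 JJ.2)
  (fun JJ => nontriv (val JJ.1) (val JJ.2))).
Implicit Types (p q : {mpoly k[N]}) (m : 'X_{1..N}).
Local Open Scope ring_scope.

Lemma phiX m : phi 'X_[m] = 'X_[phi_mnm m].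
Proof.
rewrite /Defs.phi mmapX /mmap1.
rewrite (eq_bigr (fun i => 'X_[\sum_(x in var_ideal i) U_(x)] ^+ m i)); last first.
  by move=> i _; rewrite /xJ mprodXE.
rewrite mprodXnE; congr 'X_[_]; apply/mnmP=> x.
rewrite mnm_sumE phi_mnmE; apply: eq_bigr => i _.
rewrite mulmnE mnm_sumE mulnC -sum_eq_mem; congr (_ * _)%N.
by apply: eq_bigr => j _; rewrite mnm1E.
Qed.

Lemma phiZ c p : phi (c *: p) = c *: phi p.
Proof. by rewrite /Defs.phi mmapZ mul_mpolyC. Qed.

Lemma mcoeff_phi p f : (phi p)@_f = \sum_(m <- msupp p) p@_m * (phi_mnm m == f)%:R.
Proof.
rewrite {1}(mpolyE p) rmorph_sum raddf_sum; apply: eq_bigr => m _ /=.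
by rewrite phiZ phiX mcoeffZ mcoeffX.
Qed.

Lemma mcoeff_phi_fiber1 p m : m \in msupp p ->
  (forall m', m' \in msupp p -> phi_mnm m' = phi_mnm m -> m' = m) ->
  (phi p)@_(phi_mnm m) = p@_m.
Proof.
move=> mp H; rewrite mcoeff_phi (bigD1_seq m) ?msupp_uniq //= eqxx mulr1.
rewrite big_seq_cond big1 ?addr0 // => m' /andP[m'p nm'].
by case: eqP => [/(H _ m'p) em'|]; [rewrite em' eqxx in nm' | rewrite mulr0].
Qed.

Lemma phi_in_RP p : in_RP le (phi p).
Proof.
move=> f; rewrite mcoeff_msupp mcoeff_phi.
have [/hasP[m _ /eqP <-] _|/hasPn H] := boolP (has (fun m => phi_mnm m == f) (msupp p)).
  exact: phi_mnm_weak.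
by rewrite big_seq big1 ?eqxx // => m /H /negbTE ->; rewrite mulr0.
Qed.

Lemma phi_onto_RP (q : {mpoly k[n]}) : in_RP le q -> exists p, phi p = q.
Proof.
move=> Hq; suff H (s : seq 'X_{1..n}) : {subset s <= msupp q} ->
    exists p, phi p = \sum_(f <- s) q@_f *: 'X_[f].
  by have [p ep] := H _ (fun f fq => fq); exists p; rewrite ep -mpolyE.
elim: s => [|f s IH] sub; first by exists 0; rewrite rmorph0 big_nil.
have [p ep] := IH (fun g gs => sub g (mem_behead (gs : g \in behead (f :: s)))).
have [m em] := phi_mnm_onto_weak le_anti le_trans (Hq f (sub f (mem_head _ _))).
exists (q@_f *: 'X_[m] + p).
by rewrite rmorphD /= phiZ phiX em ep big_cons.
Qed.

Lemma Uset_var_of d A : conn_ideal le A -> Uset k le A = 'X_(var_of d A).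
Proof. by move=> cA; rewrite /Uset /var_of /insubd; case: insubP => //; rewrite cA. Qed.

Lemma UJ_enum_val i : UJ k (enum_val i : cideal_fin le) = 'X_i.
Proof. by rewrite /UJ enum_valK. Qed.

Lemma syz_enum_val i j : nontriv (var_ideal i) (var_ideal j) ->
  syz k (enum_val i) (enum_val j) = 'X_[U_(i) + U_(j)] - 'X_[syz_mnm i j].
Proof.
move=> nt; rewrite /syz !UJ_enum_val -/(var_ideal i) -/(var_ideal j).
rewrite (Uset_var_of (enum_val i) (conn_idealU_var nt)).
rewrite (eq_bigr (fun K => 'X_(var_of (enum_val i) K))); last first.
  by move=> K KC; rewrite (Uset_var_of (enum_val i) (components_var_conn_ideal le_anti le_trans KC)).
by rewrite mprodXE !mpolyXD.
Qed.

Lemma phi_syz (J1 J2 : cideal_fin le) :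
  nontriv (val J1) (val J2) -> phi (syz k J1 J2) = 0.
Proof.
rewrite -[J1]enum_rankK -[J2]enum_rankK => nt.
by rewrite syz_enum_val // rmorphB /= !phiX phi_syz_mnm // subrr.
Qed.

Lemma syz_ideal_phi_eq0 p : syz_ideal p -> phi p = 0.
Proof. by apply: in_ideal_rmorph_eq0 => -[J1 J2]; apply: phi_syz. Qed.

Lemma syz_rewrite_step m : ~~ laminar m -> exists m',
  [/\ phi_mnm m' = phi_mnm m, (weight m < weight m')%N &
      syz_ideal ('X_[m] - 'X_[m'])].
Proof.
rewrite /laminar negb_forall => /existsP[i]; rewrite negb_forall => /existsP[j].
rewrite negb_imply => /andP[mi]; rewrite negb_imply negbK => /andP[mj nt].
have nij : i != j by apply: contraTneq nt => ->; rewrite /nontriv subxx andbF.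
have lem : (U_(i) + U_(j) <= m)%MM.
  apply/mnm_lepP => t; rewrite mnmDE !mnm1E.
  have [<-|_] := eqVneq i t; last by rewrite add0n; case: eqP => // <-.
  by rewrite eq_sym (negbTE nij) addn0.
set r := (m - (U_(i) + U_(j)))%MM; have em : m = (r + (U_(i) + U_(j)))%MM by rewrite submK.
exists (r + syz_mnm i j)%MM; split.
- by rewrite [in RHS]em phi_mnmD -phi_syz_mnm // -phi_mnmD.
- by rewrite {1}em !(weightD r) ltn_add2l weight_syz_mnm.
rewrite {1}em !(mpolyXD _ r) -mulrBr -syz_enum_val //.
exact/in_idealMl/(@in_ideal_gen _ _ _ _ _ (enum_val i, enum_val j)).
Qed.

Lemma laminar_congr_mnm m : exists m', laminar m' /\ syz_ideal ('X_[m] - 'X_[m']).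
Proof.
move: {2}(_ - _)%N (leqnn (3 ^ n * mdeg (phi_mnm m) - weight m)) => c.
elim: c m => [|c IH] m hc;
  (have [L|/syz_rewrite_step[m' [ep lt Im']]] := boolP (laminar m);
   first by exists m; split; rewrite // subrr; apply: in_ideal0);
  have := weight_le m'; rewrite ep => hb; first lia.
have [|m'' [L'' Im'']] := IH m'; first by rewrite ep; lia.
exists m''; split=> //; rewrite -(subrK 'X_[m'] 'X_[m]) -addrA.
exact: in_idealD.
Qed.

Lemma laminar_congr p :
  exists q, {in msupp q, forall m, laminar m} /\ syz_ideal (p - q).
Proof.
rewrite [p]mpolyE; elim: (msupp p) => [|m s [q [Lq Iq]]].
  by exists 0; split=> [m|]; rewrite ?msupp0 // big_nil subrr; apply: in_ideal0.
have [m' [L Im]] := laminar_congr_mnm m.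
exists (p@_m *: 'X_[m'] + q); split.
  move=> m'' /msuppD_le; rewrite mem_cat => /orP[/msuppZ_le /mem_msuppXP <- //|].
  exact: Lq.
rewrite big_cons opprD addrACA -scalerBr.
by apply: in_idealD => //; apply: in_idealZ.
Qed.

Lemma ker_phi_fiber p m : phi p = 0 -> m \in msupp p ->
  ~ {in msupp p, forall m', phi_mnm m' = phi_mnm m -> m' = m}.
Proof.
move=> ep mp /(mcoeff_phi_fiber1 mp); rewrite ep mcoeff0 => /esym/eqP.
by rewrite -[_ == 0]negbK -mcoeff_msupp mp.
Qed.

Lemma ker_phi_syz_ideal p : phi p = 0 -> syz_ideal p.
Proof.
move=> ep; have [q [Lq Iq]] := laminar_congr p.
have q0 : phi q = 0.
  move: (syz_ideal_phi_eq0 Iq); rewrite rmorphB /= ep sub0r.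
  by move/eqP; rewrite oppr_eq0 => /eqP.
suff q_eq0 : q = 0 by move: Iq; rewrite q_eq0 subr0.
apply/eqP; rewrite -msupp_eq0; case E: (msupp q) => [//|m s].
have mq : m \in msupp q by rewrite E mem_head.
by case: (ker_phi_fiber q0 mq) => m' m'q; apply: laminar_phi_mnm_inj; rewrite ?Lq.
Qed.

Lemma ker_phi_mdeg_ge2 p : phi p = 0 -> {in msupp p, forall m, (2 <= mdeg m)%N}.
Proof.
move=> ep m mp; rewrite leqNgt; apply/negP => small.
have le1 m' : phi_mnm m' = phi_mnm m -> (forall x, phi_mnm m' x <= 1)%N.
  by move=> e x; rewrite e (leq_trans (phi_mnm_le_mdeg m x)) // -ltnS.
apply: (ker_phi_fiber ep mp) => m' _ e.
by apply: laminar_phi_mnm_inj (e); apply: laminar_phi_mnm_le1; apply: le1.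
Qed.

End Presentation.

Section Minimality.
Variables (k : fieldType) (n : nat) (le : rel 'I_n) (J1 J2 : cideal_fin le).
Hypothesis nt12 : nontriv (val J1) (val J2).
Local Notation N := (nvars le).
Local Open Scope ring_scope.

Definition pair_point (t : 'I_N) : k :=
  ((t == enum_rank J1) || (t == enum_rank J2))%:R.

Lemma meval_UJ_neq0 J : meval pair_point (UJ k J) != 0 -> J = J1 \/ J = J2.
Proof.
rewrite /UJ mevalXU /pair_point.
have [/enum_rank_inj -> _|_] := eqVneq (enum_rank J) (enum_rank J1); first by left.
have [/enum_rank_inj -> _|_] := eqVneq (enum_rank J) (enum_rank J2); first by right.
by rewrite eqxx.
Qed.

Lemma meval_Uset_neq0 A :
  meval pair_point (Uset k le A) != 0 -> A = val J1 \/ A = val J2.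
Proof.
rewrite /Uset; case: insubP => [J _ <- /meval_UJ_neq0 [->|->]|_]; [by left|by right|].
by rewrite meval0 eqxx.
Qed.

Lemma meval_UJ_mul J3 J4 : J3 != J4 -> [set J3; J4] != [set J1; J2] ->
  meval pair_point (UJ k J3 * UJ k J4) = 0.
Proof.
move=> n34 neq; apply/eqP; apply: contraT.
rewrite mevalM mulf_eq0 negb_or => /andP[/meval_UJ_neq0 h3 /meval_UJ_neq0 h4].
by move: n34 neq; case: h3 => ->; case: h4 => ->; rewrite ?eqxx // setUC eqxx.
Qed.

(* The image of U_{J3 u J4} prod_K U_K can only be nonzero if both
   J3 u J4 and some component K of J3 n J4, a proper subset of it, lie in
   {J1, J2}; then J1 and J2 would be nested. *)
Lemma meval_syz_tail (J3 J4 : cideal_fin le) : nontriv (val J3) (val J4) ->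
  meval pair_point (Uset k le (val J3 :|: val J4) *
    \prod_(K in components le (val J3 :&: val J4)) Uset k le K) = 0.
Proof.
case/and3P=> /pred0Pn[x x34] ns34 ns43; have /and3P[_ ns12 ns21] := nt12.
apply/eqP; apply: contraT; rewrite mevalM mulf_eq0 negb_or => /andP[/meval_Uset_neq0 hU].
have xI : x \in val J3 :&: val J4 by rewrite inE.
have K0C := component_of le xI; set K0 := [set y in _ | _] in K0C.
rewrite rmorph_prod (bigD1 K0) //= mulf_eq0 negb_or => /andP[/meval_Uset_neq0 hK _].
have sK : K0 \subset val J3 :|: val J4.
  exact: subset_trans (components_sub K0C) (subset_trans (subsetIl _ _) (subsetUl _ _)).
have nK : K0 != val J3 :|: val J4.
  apply: contraNneq ns34 => eK; rewrite (subset_trans (subsetUl _ (val J4))) // -eK.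
  exact: subset_trans (components_sub K0C) (subsetIr _ _).
case: hU => eU; case: hK => eK; rewrite eU eK in nK sK.
- by rewrite eqxx in nK.
- by rewrite sK in ns21.
- by rewrite sK in ns12.
- by rewrite eqxx in nK.
Qed.

Lemma meval_syz J3 J4 : nontriv (val J3) (val J4) ->
  meval pair_point (syz k J3 J4) = meval pair_point (UJ k J3 * UJ k J4).
Proof. by move=> nt; rewrite /syz mevalB meval_syz_tail // subr0. Qed.

Lemma syz_not_redundant :
  ~ in_ideal (fun JJ : cideal_fin le * cideal_fin le => syz k JJ.1 JJ.2)
      (fun JJ => nontriv (val JJ.1) (val JJ.2) && ([set JJ.1; JJ.2] != [set J1; J2]))
      (syz k J1 J2).
Proof.
move=> syz_in; suff: meval pair_point (syz k J1 J2) = 0.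
  rewrite meval_syz // mevalM /UJ !mevalXU /pair_point !eqxx orbT mulr1.
  by move/eqP; rewrite oner_eq0.
apply: (in_ideal_rmorph_eq0 (f := meval pair_point) _ syz_in) => -[J3 J4].
move=> /andP[/= nt34 neq]; rewrite meval_syz // meval_UJ_mul //.
by apply: contraTneq nt34 => ->; rewrite /nontriv subxx andbF.
Qed.

End Minimality.

Local Open Scope ring_scope.

Theorem theorem1p2 (k : fieldType) (n : nat) (le : rel 'I_n)
    (le_refl : reflexive le) (le_anti : antisymmetric le)
    (le_trans : transitive le) :
  (* phi maps S into R_P and onto R_P *)
  (forall p : {mpoly k[nvars le]}, in_RP le (phi k p)) /\
  (forall q : {mpoly k[n]}, in_RP le q ->
     exists p : {mpoly k[nvars le]}, phi k p = q) /\
  (* minimality of the presentation: I_P = ker phi lies in (U_J)^2 *)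
  (forall p : {mpoly k[nvars le]}, phi k p = 0 ->
     forall m, m \in msupp p -> (2 <= mdeg m)%N) /\
  (* I_P is generated by the syz_{J1,J2}, {J1,J2} in Pi(P) *)
  (forall p : {mpoly k[nvars le]}, phi k p = 0 <->
     in_ideal (fun JJ : cideal_fin le * cideal_fin le => syz k JJ.1 JJ.2)
              (fun JJ => nontriv (val JJ.1) (val JJ.2)) p) /\
  (* ... minimally: no syz_{J1,J2} lies in the ideal generated by the
     syz of the other unordered pairs of Pi(P) *)
  (forall J1 J2 : cideal_fin le, nontriv (val J1) (val J2) ->
     ~ in_ideal (fun JJ : cideal_fin le * cideal_fin le => syz k JJ.1 JJ.2)
          (fun JJ => nontriv (val JJ.1) (val JJ.2) &&
                     ([set JJ.1; JJ.2] != [set J1; J2]))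
          (syz k J1 J2)).
Proof.
split; first exact: phi_in_RP.
split; first exact: phi_onto_RP.
split; first exact: ker_phi_mdeg_ge2.
split; first by move=> p; split; [apply: ker_phi_syz_ideal | apply: syz_ideal_phi_eq0].
exact: syz_not_redundant.
Qed.
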